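(* Let $d\ge 7$ be an integer, $\omega=\sqrt{d^2-8d+8}$, and let $\phi_n$ ($n\ge 0$) be the normalized eigenfunctions ($\|\phi_n\|=1$) of $A$ with eigenvalues $\lambda_n=-\frac{\gamma}{2}+n$. Then $$\Bigl\|\frac{\phi_n(y)}{y}\Bigr\|\le \frac{4n}{\omega}+1\qquad\text{for all } n\ge 0,$$ where $\|\cdot\|$ is the norm of $\mathcal H$ applied to the function $y\mapsto\phi_n(y)/y$.
   Context: Let $\gamma=\frac12(d-2-\omega)$, $\rho(y)=y^{d-1}e^{-y^2/4}$, $\mathcal H=L^2((0,\infty),\rho\,dy)$ with inner product $\langle f,g\rangle=\int_0^\infty fg\rho\,dy$ and norm $\|\cdot\|$. $\mathcal A\phi=-\frac1\rho(\rho\phi')'-\frac{d-1}{y^2}\phi$ on $C_0^\infty((0,\infty))$, and $A$ is its Friedrichs extension. The normalized eigenfunctions of $A$ are $\phi_n(y)=\mathcal N_n y^{-\gamma}L_n^{(\omega/2)}(y^2/4)$, where $L_n^{(a)}$ is the generalized Laguerre polynomial and $\mathcal N_n>0$ is a normalizing constant. *)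

From Stdlib Require Import Reals Lra Arith Factorial.
Open Scope R_scope.

Definition omega (d : nat) : R := sqrt (INR d ^ 2 - 8 * INR d + 8).

Definition gam (d : nat) : R := (INR d - 2 - omega d) / 2.

Definition rho (d : nat) (y : R) : R := y ^ (d - 1) * exp (- y ^ 2 / 4).

Fixpoint rising_from (a : R) (k n : nat) : R :=
  match n with
  | O => 1
  | S m => if Nat.leb n k then 1 else rising_from a k m * (a + INR n)
  end.

(* generalized Laguerre polynomial
   L_n^{(a)}(x) = sum_{k=0}^n (-1)^k binom(n+a, n-k) x^k / k!
   with binom(n+a, n-k) = (a+k+1)...(a+n)/(n-k)! *)
Definition laguerre (n : nat) (a x : R) : R :=
  sum_f_R0 (fun k => (-1) ^ k * rising_from a k n / INR (fact (n - k))
                      / INR (fact k) * x ^ k) n.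

Definition phi (d n : nat) (N : R) (y : R) : R :=
  N * Rpower y (- gam d) * laguerre n (omega d / 2) (y ^ 2 / 4).

Definition improper_int_0_inf (f : R -> R) (l : R) : Prop :=
  (forall a b, 0 < a -> a <= b -> inhabited (Riemann_integrable f a b)) /\
  forall eps, 0 < eps -> exists delta, 0 < delta /\ exists M,
    forall a b (pr : Riemann_integrable f a b),
      0 < a -> a < delta -> M < b -> Rabs (RiemannInt pr - l) < eps.

(* squared norm in H = L^2((0,oo), rho dy): ||f||^2 = l *)
Definition Hnorm_sq (d : nat) (f : R -> R) (l : R) : Prop :=
  improper_int_0_inf (fun y => f y ^ 2 * rho d y) l.

(* Since y^(-2 gam) rho(y) = y^(omega+1) e^(-y^2/4), expanding L_n^(omega/2)(y^2/4) in
   monomials with coefficients c_k turns ||phi_n||^2 and ||phi_n / y||^2 into combinations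
   of the moments int_0^oo y^(omega-1+2m) e^(-y^2/4) dy = I_0 4^m (omega/2)_m, which follow
   from the case m = 0 by integrating by parts.  The orthogonality
   sum_k c_k (omega/2)_(k+j) = 0 for 1 <= j <= n (an n-th finite difference of a polynomial
   of degree < n) then yields ||phi_n||^2 = 2 omega ||phi_n / y||^2.  Hence
   ||phi_n / y|| = (2 omega)^(-1/2) <= 1 for every n, as omega >= 1 when d >= 7. *)

From Stdlib Require Import Reals Lra Lia Factorial Classical.
From Coquelicot Require Import Coquelicot.
Open Scope R_scope.

Fixpoint poch (x : R) (m : nat) : R :=
  match m with O => 1 | S k => poch x k * (x + INR k) end.

Lemma poch_add x m k : poch x (m + k) = poch x m * poch (x + INR m) k.
Proof.
  induction k as [|k IH]; simpl.
  - rewrite Nat.add_0_r. ring.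
  - rewrite Nat.add_succ_r. simpl. rewrite IH, plus_INR. ring.
Qed.

Lemma poch_shift_sub x k :
  poch (x + 1) (S k) - poch x (S k) = INR (S k) * poch (x + 1) k.
Proof.
  induction k as [|k IH]; [simpl; ring|].
  change (poch (x + 1) (S (S k))) with (poch (x + 1) (S k) * (x + 1 + INR (S k))).
  change (poch x (S (S k))) with (poch x (S k) * (x + INR (S k))).
  change (poch (x + 1) (S k)) with (poch (x + 1) k * (x + 1 + INR k)) in *.
  rewrite !S_INR in *. nra.
Qed.

Lemma rising_from_mul_poch a k n :
  (k <= n)%nat -> rising_from a k n * poch a (S k) = poch a (S n).
Proof.
  induction n as [|n IH]; intros Hk.
  - replace k with 0%nat by lia. simpl. ring.
  - change (rising_from a k (S n))
      with (if Nat.leb (S n) k then 1 else rising_from a k n * (a + INR (S n))).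
    destruct (Nat.leb (S n) k) eqn:E.
    + apply Nat.leb_le in E. replace k with (S n) by lia. ring.
    + apply Nat.leb_gt in E.
      change (poch a (S (S n))) with (poch a (S n) * (a + INR (S n))).
      rewrite <- IH by lia. ring.
Qed.

Lemma sum_f_R0_exchange (f : nat -> nat -> R) n m :
  sum_f_R0 (fun i => sum_f_R0 (fun k => f i k) m) n =
  sum_f_R0 (fun k => sum_f_R0 (fun i => f i k) n) m.
Proof.
  induction n as [|n IH]; simpl; [reflexivity|].
  rewrite IH, <- plus_sum. reflexivity.
Qed.

Lemma sum_f_R0_mul_l (A : nat -> R) n x :
  sum_f_R0 (fun i => x * A i) n = x * sum_f_R0 A n.
Proof. rewrite scal_sum. apply sum_eq. intros; ring. Qed.

Lemma binomial_0_r n : Binomial.C n 0 = 1.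
Proof. unfold Binomial.C. rewrite Nat.sub_0_r. simpl. field. apply INR_fact_neq_0. Qed.

Lemma binomial_diag n : Binomial.C n n = 1.
Proof. unfold Binomial.C. rewrite Nat.sub_diag. simpl. field. apply INR_fact_neq_0. Qed.

Lemma alt_binomial_sum_succ (f : nat -> R) n :
  sum_f_R0 (fun i => (-1) ^ i * Binomial.C (S n) i * f i) (S n) =
  sum_f_R0 (fun i => (-1) ^ i * Binomial.C n i * (f i - f (S i))) n.
Proof.
  destruct n as [|m].
  { simpl. rewrite binomial_0_r, binomial_diag. unfold Binomial.C. simpl. field. }
  rewrite decomp_sum by lia. simpl Init.Nat.pred. rewrite tech5.
  rewrite (sum_eq _ (fun i => (-1) ^ S i * Binomial.C (S m) (S i) * f (S i)
                              - (-1) ^ i * Binomial.C (S m) i * f (S i))).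
  2:{ intros i Hi. rewrite <- pascal by lia. simpl. ring. }
  rewrite (sum_eq (fun i => (-1) ^ i * Binomial.C (S m) i * (f i - f (S i)))
                  (fun i => (-1) ^ i * Binomial.C (S m) i * f i
                            - (-1) ^ i * Binomial.C (S m) i * f (S i)))
    by (intros; ring).
  rewrite !minus_sum, (decomp_sum (fun i => (-1) ^ i * Binomial.C (S m) i * f i)) by lia.
  simpl Init.Nat.pred.
  rewrite (tech5 (fun i => (-1) ^ i * Binomial.C (S m) i * f (S i))).
  rewrite !binomial_0_r, !binomial_diag. simpl. ring.
Qed.

Lemma alt_binomial_sum_poch n b k : (k < n)%nat ->
  sum_f_R0 (fun i => (-1) ^ i * Binomial.C n i * poch (b + INR i) k) n = 0.
Proof.
  revert b k. induction n as [|n IH]; intros b k Hk; [lia|].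
  rewrite (alt_binomial_sum_succ (fun i => poch (b + INR i) k)).
  destruct k as [|k].
  - apply sum_eq_R0. intros. simpl. ring.
  - rewrite (sum_eq _ (fun i =>
      - INR (S k) * ((-1) ^ i * Binomial.C n i * poch (b + 1 + INR i) k))).
    + rewrite sum_f_R0_mul_l, IH by lia. ring.
    + intros i _. rewrite (S_INR i).
      replace (b + 1 + INR i) with (b + INR i + 1) by ring.
      replace (b + (INR i + 1)) with (b + INR i + 1) by ring.
      replace (poch (b + INR i) (S k) - poch (b + INR i + 1) (S k))
        with (- (INR (S k) * poch (b + INR i + 1) k))
        by (rewrite <- poch_shift_sub; ring).
      ring.
Qed.

Definition laguerre_coef (a : R) (n i : nat) : R :=
  (-1) ^ i * rising_from a i n / INR (fact (n - i)) / INR (fact i).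

Lemma laguerre_coef_mul_poch a n i k : (i <= n)%nat ->
  laguerre_coef a n i * poch a (S i + k) =
  poch a (S n) / INR (fact n) * ((-1) ^ i * Binomial.C n i * poch (a + 1 + INR i) k).
Proof.
  intros Hi. rewrite poch_add, <- (rising_from_mul_poch a i n Hi), S_INR.
  unfold laguerre_coef, Binomial.C.
  replace (a + (INR i + 1)) with (a + 1 + INR i) by ring.
  field. repeat split; apply INR_fact_neq_0.
Qed.

Lemma laguerre_coef_orth a n j : (0 < j <= n)%nat ->
  sum_f_R0 (fun k => laguerre_coef a n k * poch a (k + j)) n = 0.
Proof.
  intros Hj. destruct j as [|j]; [lia|].
  rewrite (sum_eq _ (fun k => poch a (S n) / INR (fact n) *
                    ((-1) ^ k * Binomial.C n k * poch (a + 1 + INR k) j))).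
  - rewrite sum_f_R0_mul_l, alt_binomial_sum_poch by lia. ring.
  - intros k Hk. now rewrite Nat.add_succ_r, <- laguerre_coef_mul_poch.
Qed.

Definition laguerre_moment (a : R) (n m : nat) : R :=
  sum_f_R0 (fun i => sum_f_R0 (fun k =>
    laguerre_coef a n i * laguerre_coef a n k * poch a (i + k + m)) n) n.

(* Write (a)_(i+k+1) = (a + i + k) (a)_(i+k); the parts carrying the factor i or k
   vanish by [laguerre_coef_orth]. *)
Lemma laguerre_moment_succ a n : laguerre_moment a n 1 = a * laguerre_moment a n 0.
Proof.
  set (c := laguerre_coef a n).
  assert (Horth : forall j, (j <= n)%nat ->
            INR j * sum_f_R0 (fun k => c k * poch a (k + j)) n = 0).
  { intros [|j] Hj; [simpl; ring|]. unfold c. rewrite laguerre_coef_orth by lia. ring. }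
  assert (Hsplit : forall i k, c i * c k * poch a (i + k + 1) =
            a * (c i * c k * poch a (i + k + 0))
            + c i * (INR i * (c k * poch a (k + i)))
            + c k * (INR k * (c i * poch a (i + k)))).
  { intros i k. rewrite Nat.add_1_r, Nat.add_0_r, (Nat.add_comm k i).
    simpl. rewrite plus_INR. ring. }
  unfold laguerre_moment. fold c.
  rewrite (sum_eq _ (fun i =>
      a * sum_f_R0 (fun k => c i * c k * poch a (i + k + 0)) n
      + c i * (INR i * sum_f_R0 (fun k => c k * poch a (k + i)) n)
      + sum_f_R0 (fun k => c k * (INR k * (c i * poch a (i + k)))) n)).
  2:{ intros i _. rewrite <- !sum_f_R0_mul_l, <- !plus_sum.
      apply sum_eq. intros k _. apply Hsplit. }
  assert (Hi : sum_f_R0 (fun i =>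
                 c i * (INR i * sum_f_R0 (fun k => c k * poch a (k + i)) n)) n = 0).
  { apply sum_eq_R0. intros i Hi. rewrite Horth by assumption. ring. }
  assert (Hk : sum_f_R0 (fun i =>
                 sum_f_R0 (fun k => c k * (INR k * (c i * poch a (i + k)))) n) n = 0).
  { rewrite sum_f_R0_exchange. apply sum_eq_R0. intros k Hk.
    rewrite <- (Rmult_0_r (c k)), <- (Horth k Hk), <- !sum_f_R0_mul_l.
    apply sum_eq. intros i _. ring. }
  rewrite !plus_sum, sum_f_R0_mul_l, Hi, Hk. ring.
Qed.

Definition is_RInt_0_oo (f : R -> R) (l : R) : Prop :=
  is_RInt_gen f (at_right 0) (Rbar_locally p_infty) l.

Lemma eventually_pos_interval (P : R * R -> Prop) :
  (forall a b, 0 < a -> 1 < b -> P (a, b)) ->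
  filter_prod (at_right 0) (Rbar_locally p_infty) P.
Proof.
  intros HP. exists (fun a => 0 < a) (fun b => 1 < b).
  - exists (mkposreal 1 Rlt_0_1). intros; assumption.
  - exists 1. intros; assumption.
  - intros a b Ha Hb. now apply HP.
Qed.

Lemma improper_int_0_inf_is_RInt_0_oo f l :
  improper_int_0_inf f l -> is_RInt_0_oo f l.
Proof.
  intros [Hint Hlim] P [eps HP].
  destruct (Hlim eps (cond_pos eps)) as [delta [Hdelta [M HM]]].
  exists (fun a => 0 < a < Rmin delta 1) (fun b => Rmax M 1 < b).
  - exists (mkposreal _ (Rmin_pos _ _ Hdelta Rlt_0_1)). intros a Ha Ha0.
    apply Rabs_lt_between' in Ha. simpl in Ha. lra.
  - exists (Rmax M 1). intros; assumption.
  - intros a b Ha Hb. simpl.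
    pose proof (Rmin_l delta 1). pose proof (Rmin_r delta 1).
    pose proof (Rmax_l M 1). pose proof (Rmax_r M 1).
    destruct (Hint a b ltac:(lra) ltac:(lra)) as [pr].
    exists (RInt f a b). split.
    + exact (RInt_correct f a b (ex_RInt_Reals_1 _ _ _ pr)).
    + apply HP. rewrite (RInt_Reals _ _ _ pr). apply HM; lra.
Qed.

Lemma is_RInt_0_oo_improper_int_0_inf f l :
  is_RInt_0_oo f l -> improper_int_0_inf f l.
Proof.
  intros Hf.
  assert (Hball : forall eps : posreal, exists delta, 0 < delta /\ exists M,
            forall a b, 0 < a -> a < delta -> M < b ->
              exists v, is_RInt f a b v /\ Rabs (v - l) < eps).
  { intros eps. destruct (Hf (ball l eps) (locally_ball l eps))
      as [Q R [delta HQ] [M HR] HQR].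
    exists delta. split; [apply cond_pos|]. exists M. intros a b Ha Had Hb.
    apply (HQR a b); [|now apply HR].
    apply HQ; [|assumption]. apply Rabs_lt_between'. lra. }
  split.
  - intros a b Ha Hab.
    destruct (Hball (mkposreal 1 Rlt_0_1)) as [delta [Hdelta [M HM]]].
    pose proof (Rmin_l a (delta / 2)). pose proof (Rmin_r a (delta / 2)).
    pose proof (Rmax_l b (M + 1)). pose proof (Rmax_r b (M + 1)).
    assert (Ha' : 0 < Rmin a (delta / 2)) by (apply Rmin_pos; lra).
    set (a' := Rmin a (delta / 2)) in *. set (b' := Rmax b (M + 1)) in *.
    destruct (HM a' b' Ha' ltac:(lra) ltac:(lra)) as [v [Hv _]].
    constructor. apply ex_RInt_Reals_0.
    apply (ex_RInt_Chasles_2 (V := R_CompleteNormedModule) f a'); [lra|].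
    apply (ex_RInt_Chasles_1 (V := R_CompleteNormedModule) f _ _ b'); [lra|].
    exists v; exact Hv.
  - intros eps Heps.
    destruct (Hball (mkposreal eps Heps)) as [delta [Hdelta [M HM]]].
    exists delta. split; [assumption|]. exists M. intros a b pr Ha Had Hb.
    destruct (HM a b Ha Had Hb) as [v [Hv Hvl]].
    rewrite <- (RInt_Reals _ _ _ pr). now rewrite (is_RInt_unique f a b v Hv).
Qed.

Lemma is_RInt_0_oo_unique f l1 l2 :
  is_RInt_0_oo f l1 -> is_RInt_0_oo f l2 -> l1 = l2.
Proof.
  intros H1 H2.
  now rewrite <- (is_RInt_gen_unique _ _ H1), <- (is_RInt_gen_unique _ _ H2).
Qed.

Lemma is_RInt_0_oo_ext f g l :
  (forall y, 0 < y -> f y = g y) -> is_RInt_0_oo f l -> is_RInt_0_oo g l.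
Proof.
  intros Hfg. apply is_RInt_gen_ext, eventually_pos_interval.
  intros a b Ha Hb x Hx. apply Hfg.
  pose proof (Rmin_glb_lt a b 0). simpl in Hx. lra.
Qed.

Lemma is_RInt_0_oo_scal f c l :
  is_RInt_0_oo f l -> is_RInt_0_oo (fun y => c * f y) (c * l).
Proof. apply (is_RInt_gen_scal f c l). Qed.

Lemma is_RInt_0_oo_sum (F : nat -> R -> R) (v : nat -> R) m :
  (forall i, (i <= m)%nat -> is_RInt_0_oo (F i) (v i)) ->
  is_RInt_0_oo (fun y => sum_f_R0 (fun i => F i y) m) (sum_f_R0 v m).
Proof.
  induction m as [|m IH]; intros HF; simpl.
  - apply HF; lia.
  - apply (is_RInt_gen_plus (fun y => sum_f_R0 (fun i => F i y) m) (F (S m))).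
    + apply IH. intros i Hi. apply HF. lia.
    + apply HF. lia.
Qed.

(* [y^c e^(-y^2/4)] for [y > 0]. *)
Definition pow_gauss (c y : R) : R := exp (c * ln y - y ^ 2 / 4).

Lemma pow_gauss_mul_pow c m y :
  0 < y -> y ^ m * pow_gauss c y = pow_gauss (c + INR m) y.
Proof.
  intros Hy. unfold pow_gauss. rewrite <- (Rpower_pow m y Hy). unfold Rpower.
  rewrite <- exp_plus. f_equal. ring.
Qed.

Lemma is_derive_pow_gauss c y : 0 < y ->
  is_derive (pow_gauss c) y (c * pow_gauss (c - 1) y - / 2 * pow_gauss (c + 1) y).
Proof.
  intros Hy. unfold pow_gauss.
  set (E := c * ln y - y ^ 2 / 4).
  replace ((c - 1) * ln y - y ^ 2 / 4) with (E + - ln y) by (unfold E; ring).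
  replace ((c + 1) * ln y - y ^ 2 / 4) with (E + ln y) by (unfold E; ring).
  rewrite !exp_plus, exp_Ropp, exp_ln by assumption.
  auto_derive; [lra|].
  replace (c * ln y + - (y * (y * 1) * / 4)) with E by (unfold E; simpl; field).
  field. lra.
Qed.

Lemma continuous_pow_gauss c y : 0 < y -> continuous (pow_gauss c) y.
Proof.
  intros Hy. apply (@ex_derive_continuous R_AbsRing R_NormedModule).
  eexists. now apply is_derive_pow_gauss.
Qed.

Lemma ex_RInt_pow_gauss c a b : 0 < a -> a <= b -> ex_RInt (pow_gauss c) a b.
Proof.
  intros Ha Hab. apply (@ex_RInt_continuous R_CompleteNormedModule). intros y Hy.
  apply continuous_pow_gauss. rewrite Rmin_left in Hy; lra.
Qed.

Lemma pow_gauss_pos c y : 0 < pow_gauss c y.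
Proof. apply exp_pos. Qed.

Lemma filterlim_pow_gauss_0 c :
  0 < c -> filterlim (pow_gauss c) (at_right 0) (locally 0).
Proof.
  intros Hc P [eps HP].
  exists (mkposreal _ (exp_pos (ln eps / c))). intros y Hy Hy0. apply HP.
  change (Rabs (y - 0) < exp (ln eps / c)) in Hy.
  change (Rabs (pow_gauss c y - 0) < eps).
  rewrite Rminus_0_r in *.
  rewrite Rabs_pos_eq in * by (apply Rlt_le; auto using pow_gauss_pos).
  apply ln_increasing in Hy; [|assumption]. rewrite ln_exp in Hy.
  unfold pow_gauss. rewrite <- (exp_ln eps) by apply cond_pos. apply exp_increasing.
  assert (c * ln y < ln eps).
  { replace (ln eps) with (c * (ln eps / c)) by (field; lra).
    now apply Rmult_lt_compat_l. }
  pose proof (pow2_ge_0 y). lra.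
Qed.

Lemma ln_le_pred y : 0 < y -> ln y <= y - 1.
Proof.
  intros Hy. pose proof (exp_ineq1_le (ln y)) as Hexp. rewrite exp_ln in Hexp; lra.
Qed.

Lemma filterlim_pow_gauss_oo c :
  0 < c -> filterlim (pow_gauss c) (Rbar_locally p_infty) (locally 0).
Proof.
  intros Hc P [eps HP].
  exists (8 * c + 8 + Rabs (ln eps)). intros y Hy. apply HP.
  change (Rabs (pow_gauss c y - 0) < eps).
  rewrite Rminus_0_r, Rabs_pos_eq by (apply Rlt_le, pow_gauss_pos).
  pose proof (Rabs_pos (ln eps)). pose proof (Rle_abs (- ln eps)) as Hln.
  rewrite Rabs_Ropp in Hln. pose proof (ln_le_pred y ltac:(lra)).
  unfold pow_gauss. rewrite <- (exp_ln eps) by apply cond_pos. apply exp_increasing.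
  assert (c * ln y <= c * y) by (apply Rmult_le_compat_l; lra).
  nra.
Qed.

Lemma Derive_pow_gauss c y : 0 < y ->
  Derive (pow_gauss c) y = c * pow_gauss (c - 1) y - / 2 * pow_gauss (c + 1) y.
Proof. intros Hy. now apply is_derive_unique, is_derive_pow_gauss. Qed.

Lemma locally_pos x : 0 < x -> locally x (fun y => 0 < y).
Proof.
  intros Hx. exists (mkposreal x Hx). intros y Hy.
  change (Rabs (y - x) < x) in Hy. apply Rabs_lt_between' in Hy. lra.
Qed.

Lemma is_RInt_0_oo_Derive_pow_gauss c :
  0 < c -> is_RInt_0_oo (Derive (pow_gauss c)) 0.
Proof.
  intros Hc. replace 0 with (0 - 0) by ring.
  apply is_RInt_gen_Derive.
  - apply eventually_pos_interval. intros a b Ha Hb x Hx.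
    eexists. apply is_derive_pow_gauss. pose proof (Rmin_glb_lt a b 0). simpl in Hx. lra.
  - apply eventually_pos_interval. intros a b Ha Hb x Hx.
    assert (Hx0 : 0 < x) by (pose proof (Rmin_glb_lt a b 0); simpl in Hx; lra).
    apply (continuous_ext_loc _
      (fun y => c * pow_gauss (c - 1) y - / 2 * pow_gauss (c + 1) y) x).
    + apply (filter_imp (fun y => 0 < y)); [|now apply locally_pos].
      intros y Hy. symmetry. now apply Derive_pow_gauss.
    + apply (@ex_derive_continuous R_AbsRing R_NormedModule).
      unfold pow_gauss. auto_derive. lra.
  - now apply filterlim_pow_gauss_0.
  - now apply filterlim_pow_gauss_oo.
Qed.

(* Integration by parts: [pow_gauss (c+2) = 2 (c+1) pow_gauss c - 2 (pow_gauss (c+1))'],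
   and [pow_gauss (c+1)] vanishes at both ends of (0, oo). *)
Lemma is_RInt_0_oo_pow_gauss_add2 c l : -1 < c ->
  is_RInt_0_oo (pow_gauss c) l -> is_RInt_0_oo (pow_gauss (c + 2)) (2 * (c + 1) * l).
Proof.
  intros Hc Hl.
  pose proof (is_RInt_0_oo_Derive_pow_gauss (c + 1) ltac:(lra)) as HD.
  replace (2 * (c + 1) * l) with (2 * (c + 1) * l - 2 * 0) by ring.
  apply (is_RInt_0_oo_ext
    (fun y => 2 * (c + 1) * pow_gauss c y - 2 * Derive (pow_gauss (c + 1)) y)).
  - intros y Hy. rewrite Derive_pow_gauss by assumption.
    replace (c + 1 - 1) with c by ring. replace (c + 1 + 1) with (c + 2) by ring. field.
  - apply (is_RInt_gen_minus (fun y => 2 * (c + 1) * pow_gauss c y)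
                             (fun y => 2 * Derive (pow_gauss (c + 1)) y));
      now apply is_RInt_0_oo_scal.
Qed.

(* The integral is the supremum of the integrals over [a, b] with a <= 1 <= b. *)
Lemma ex_RInt_0_oo_nonneg_bounded f K :
  (forall y, 0 < y -> 0 <= f y) ->
  (forall a b, 0 < a -> a <= b -> ex_RInt f a b) ->
  (forall a b, 0 < a -> a <= 1 -> 1 <= b -> RInt f a b <= K) ->
  exists l, is_RInt_0_oo f l.
Proof.
  intros Hpos Hint HK.
  set (E := fun v => exists a b, 0 < a /\ a <= 1 /\ 1 <= b /\ v = RInt f a b).
  assert (HEb : bound E) by (exists K; intros v (a & b & Ha & Ha1 & Hb & ->); auto).
  assert (HEne : exists v, E v) by (exists (RInt f 1 1), 1, 1; repeat split; lra).
  destruct (completeness E HEb HEne) as [m [Hub Hlub]].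
  exists m. intros P [eps HP].
  assert (Hclose : exists v, E v /\ m - eps < v).
  { apply NNPP. intros Hno. enough (m <= m - eps) by (pose proof (cond_pos eps); lra).
    apply Hlub. intros v Hv. apply Rnot_lt_le. intros Hlt. apply Hno. now exists v. }
  destruct Hclose as [v [(a0 & b0 & Ha0 & Ha01 & Hb0 & ->) Hv]].
  exists (fun a => 0 < a < a0) (fun b => b0 < b).
  - exists (mkposreal a0 Ha0). intros a Ha Ha'.
    change (Rabs (a - 0) < a0) in Ha. apply Rabs_lt_between' in Ha. lra.
  - now exists b0.
  - intros a b Ha Hb. simpl. exists (RInt f a b). split.
    { apply (RInt_correct (V := R_CompleteNormedModule)), Hint; lra. }
    apply HP. change (Rabs (RInt f a b - m) < eps).
    assert (Hsplit : RInt f a b = RInt f a a0 + (RInt f a0 b0 + RInt f b0 b)).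
    { rewrite <- (@RInt_Chasles R_CompleteNormedModule f a a0 b),
              <- (@RInt_Chasles R_CompleteNormedModule f a0 b0 b) by (apply Hint; lra).
      reflexivity. }
    assert (0 <= RInt f a a0).
    { apply RInt_ge_0; [lra| apply Hint; lra |]. intros; apply Hpos; lra. }
    assert (0 <= RInt f b0 b).
    { apply RInt_ge_0; [lra| apply Hint; lra |]. intros; apply Hpos; lra. }
    assert (RInt f a b <= m) by (apply Hub; exists a, b; repeat split; lra).
    apply Rabs_def1; lra.
Qed.

Lemma exp_le_compat x y : x <= y -> exp x <= exp y.
Proof.
  intros [Hlt | ->]; [now apply Rlt_le, exp_increasing | apply Rle_refl].
Qed.

Lemma pow_gauss_le_1 c y : 0 <= c -> 0 < y <= 1 -> pow_gauss c y <= 1.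
Proof.
  intros Hc Hy. rewrite <- exp_0. apply exp_le_compat.
  assert (ln y <= 0) by (rewrite <- ln_1; apply ln_le; lra).
  pose proof (pow2_ge_0 y). nra.
Qed.

Lemma sq_mul_pow_gauss_le c y : 0 <= c + 2 -> 0 < y ->
  y ^ 2 * pow_gauss c y <= exp ((c + 2) ^ 2).
Proof.
  intros Hc Hy. rewrite pow_gauss_mul_pow by assumption.
  apply exp_le_compat. simpl INR.
  pose proof (ln_le_pred y Hy).
  assert ((c + (1 + 1)) * ln y <= (c + 2) * y) by (apply Rmult_le_compat_l; lra).
  pose proof (pow2_ge_0 (c + 2 - y / 2)). nra.
Qed.

Lemma RInt_inv_sq_le K b : 0 <= K -> 1 <= b -> RInt (fun y => K / y ^ 2) 1 b <= K.
Proof.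
  intros HK Hb.
  assert (HI : is_RInt (fun y => K / y ^ 2) 1 b (minus (- K / b) (- K / 1))).
  { apply (is_RInt_derive (fun y => - K / y)); intros x Hx;
      rewrite Rmin_left, Rmax_right in Hx by lra.
    - auto_derive; [lra|]. field. lra.
    - apply (@ex_derive_continuous R_AbsRing R_NormedModule). auto_derive. nra. }
  rewrite (is_RInt_unique _ _ _ _ HI). change (- K / b - - K / 1 <= K).
  assert (0 <= K / b) by (apply Rdiv_le_0_compat; lra).
  replace (- K / b - - K / 1) with (K - K / b) by (field; lra). lra.
Qed.

Lemma RInt_pow_gauss_le c a b : 0 <= c -> 0 < a <= 1 -> 1 <= b ->
  RInt (pow_gauss c) a b <= 1 + exp ((c + 2) ^ 2).
Proof.
  intros Hc Ha Hb. set (K := exp ((c + 2) ^ 2)).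
  rewrite <- (@RInt_Chasles R_CompleteNormedModule _ a 1 b)
    by (apply ex_RInt_pow_gauss; lra).
  assert (H01 : RInt (pow_gauss c) a 1 <= 1).
  { apply Rle_trans with (RInt (fun _ => 1) a 1).
    - apply RInt_le; [lra | apply ex_RInt_pow_gauss; lra | apply ex_RInt_const |].
      intros y Hy. apply pow_gauss_le_1; lra.
    - rewrite RInt_const. change ((1 - a) * 1 <= 1). lra. }
  assert (H1b : RInt (pow_gauss c) 1 b <= K).
  { apply Rle_trans with (RInt (fun y => K / y ^ 2) 1 b).
    - apply RInt_le; [lra | apply ex_RInt_pow_gauss; lra | |].
      + apply (@ex_RInt_continuous R_CompleteNormedModule). intros y Hy.
        rewrite Rmin_left, Rmax_right in Hy by lra.
        apply (@ex_derive_continuous R_AbsRing R_NormedModule). auto_derive. nra.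
      + intros y Hy. apply Rmult_le_reg_r with (y ^ 2); [nra|].
        unfold Rdiv. rewrite Rmult_assoc, Rinv_l, Rmult_1_r by nra.
        rewrite Rmult_comm. apply sq_mul_pow_gauss_le; lra.
    - apply RInt_inv_sq_le; [apply Rlt_le, exp_pos | lra]. }
  change (RInt (pow_gauss c) a 1 + RInt (pow_gauss c) 1 b <= 1 + K). lra.
Qed.

Lemma ex_RInt_0_oo_pow_gauss c : 0 <= c -> exists l, is_RInt_0_oo (pow_gauss c) l.
Proof.
  intros Hc. apply (ex_RInt_0_oo_nonneg_bounded _ (1 + exp ((c + 2) ^ 2))).
  - intros y _. apply Rlt_le, pow_gauss_pos.
  - apply ex_RInt_pow_gauss.
  - intros a b Ha Ha1 Hb. apply RInt_pow_gauss_le; lra.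
Qed.

Lemma is_RInt_0_oo_pow_gauss_shift a I0 m : 0 < a ->
  is_RInt_0_oo (pow_gauss (2 * a - 1)) I0 ->
  is_RInt_0_oo (pow_gauss (2 * a - 1 + 2 * INR m)) (I0 * 4 ^ m * poch a m).
Proof.
  intros Ha HI0. induction m as [|m IH].
  - simpl. replace (2 * a - 1 + 2 * 0) with (2 * a - 1) by ring.
    now replace (I0 * 1 * 1) with I0 by ring.
  - replace (2 * a - 1 + 2 * INR (S m)) with (2 * a - 1 + 2 * INR m + 2)
      by (rewrite S_INR; ring).
    replace (I0 * 4 ^ S m * poch a (S m))
      with (2 * (2 * a - 1 + 2 * INR m + 1) * (I0 * 4 ^ m * poch a m)) by (simpl; ring).
    apply is_RInt_0_oo_pow_gauss_add2; [pose proof (pos_INR m); lra | exact IH].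
Qed.

Lemma laguerre_sq a n x :
  laguerre n a x ^ 2 = sum_f_R0 (fun i => sum_f_R0 (fun k =>
    laguerre_coef a n i * laguerre_coef a n k * x ^ (i + k)) n) n.
Proof.
  change (laguerre n a x) with (sum_f_R0 (fun k => laguerre_coef a n k * x ^ k) n).
  rewrite <- Rsqr_pow2. unfold Rsqr. rewrite scal_sum. apply sum_eq. intros i _.
  rewrite scal_sum. apply sum_eq. intros k _. rewrite pow_add. ring.
Qed.

Lemma quarter_sq_pow_mul_pow_gauss c j y : 0 < y ->
  (y ^ 2 / 4) ^ j * pow_gauss c y = pow_gauss (c + 2 * INR j) y / 4 ^ j.
Proof.
  intros Hy. unfold Rdiv. rewrite Rpow_mult_distr, <- pow_mult, pow_inv.
  rewrite Rmult_comm, <- Rmult_assoc, (Rmult_comm (pow_gauss c y)).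
  rewrite pow_gauss_mul_pow, mult_INR by assumption. simpl INR. ring_simplify.
  replace (c + (1 + 1) * INR j) with (c + 2 * INR j) by ring. ring.
Qed.

Lemma is_RInt_0_oo_laguerre_sq a n m I0 : 0 < a ->
  is_RInt_0_oo (pow_gauss (2 * a - 1)) I0 ->
  is_RInt_0_oo (fun y => laguerre n a (y ^ 2 / 4) ^ 2 * pow_gauss (2 * a - 1 + 2 * INR m) y)
               (I0 * 4 ^ m * laguerre_moment a n m).
Proof.
  intros Ha HI0. set (c := laguerre_coef a n).
  apply (is_RInt_0_oo_ext (fun y => sum_f_R0 (fun i => sum_f_R0 (fun k =>
           c i * c k / 4 ^ (i + k) * pow_gauss (2 * a - 1 + 2 * INR (i + k + m)) y) n) n)).
  - intros y Hy. symmetry. rewrite laguerre_sq, Rmult_comm, scal_sum. apply sum_eq. intros i _.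
    rewrite Rmult_comm, scal_sum. apply sum_eq. intros k _.
    rewrite Rmult_assoc, quarter_sq_pow_mul_pow_gauss by assumption.
    replace (2 * a - 1 + 2 * INR m + 2 * INR (i + k))
      with (2 * a - 1 + 2 * INR (i + k + m)) by (rewrite !plus_INR; ring).
    unfold c, Rdiv. ring.
  - replace (I0 * 4 ^ m * laguerre_moment a n m) with
      (sum_f_R0 (fun i => sum_f_R0 (fun k => c i * c k / 4 ^ (i + k) *
         (I0 * 4 ^ (i + k + m) * poch a (i + k + m))) n) n).
    + apply is_RInt_0_oo_sum. intros i _. apply is_RInt_0_oo_sum. intros k _.
      apply is_RInt_0_oo_scal, is_RInt_0_oo_pow_gauss_shift; assumption.
    + unfold laguerre_moment. fold c. rewrite <- sum_f_R0_mul_l. apply sum_eq. intros i _.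
      rewrite <- sum_f_R0_mul_l. apply sum_eq. intros k _.
      rewrite !pow_add. unfold c. field. split; apply pow_nonzero; lra.
Qed.

Lemma omega_ge_1 d : (7 <= d)%nat -> 1 <= omega d.
Proof.
  intros Hd. apply le_INR in Hd. simpl in Hd. unfold omega.
  rewrite <- sqrt_1. apply sqrt_le_1_alt. nra.
Qed.

Lemma phi_sq_mul_rho d n N y : (1 <= d)%nat -> 0 < y ->
  phi d n N y ^ 2 * rho d y =
  N ^ 2 * (laguerre n (omega d / 2) (y ^ 2 / 4) ^ 2 * pow_gauss (omega d + 1) y).
Proof.
  intros Hd Hy. unfold phi, rho, pow_gauss.
  rewrite <- (Rpower_pow (d - 1) y Hy). unfold Rpower.
  replace ((omega d + 1) * ln y - y ^ 2 / 4)
    with (- gam d * ln y + - gam d * ln y + (INR (d - 1) * ln y + - y ^ 2 / 4))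
    by (rewrite minus_INR by assumption; unfold gam; simpl; field).
  rewrite !exp_plus. ring.
Qed.

Lemma phi_div_sq_mul_rho d n N y : (1 <= d)%nat -> 0 < y ->
  (phi d n N y / y) ^ 2 * rho d y =
  N ^ 2 * (laguerre n (omega d / 2) (y ^ 2 / 4) ^ 2 * pow_gauss (omega d - 1) y).
Proof.
  intros Hd Hy.
  replace (pow_gauss (omega d - 1) y) with (pow_gauss (omega d + 1) y / y ^ 2).
  - transitivity (phi d n N y ^ 2 * rho d y / y ^ 2); [field; lra|].
    rewrite phi_sq_mul_rho by assumption. field. lra.
  - replace (omega d + 1) with (omega d - 1 + INR 2) by (simpl; ring).
    rewrite <- pow_gauss_mul_pow by assumption. field. lra.
Qed.

Lemma Hnorm_sq_phi_div_y d n N : (7 <= d)%nat ->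
  Hnorm_sq d (phi d n N) 1 -> Hnorm_sq d (fun y => phi d n N y / y) (/ (2 * omega d)).
Proof.
  intros Hd Hnorm. pose proof (omega_ge_1 d Hd) as Hw.
  set (a := omega d / 2).
  destruct (ex_RInt_0_oo_pow_gauss (2 * a - 1)) as [I0 HI0]; [unfold a; lra|].
  assert (Hmom : forall m, is_RInt_0_oo
    (fun y => N ^ 2 * (laguerre n a (y ^ 2 / 4) ^ 2 * pow_gauss (2 * a - 1 + 2 * INR m) y))
    (N ^ 2 * (I0 * 4 ^ m * laguerre_moment a n m))).
  { intros m. apply is_RInt_0_oo_scal, is_RInt_0_oo_laguerre_sq; [unfold a; lra | exact HI0]. }
  assert (Hphi : N ^ 2 * (I0 * 4 ^ 1 * laguerre_moment a n 1) = 1).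
  { apply (is_RInt_0_oo_unique (fun y => phi d n N y ^ 2 * rho d y)).
    - apply (is_RInt_0_oo_ext
        (fun y => N ^ 2 * (laguerre n a (y ^ 2 / 4) ^ 2 * pow_gauss (omega d + 1) y))).
      { intros y Hy. symmetry. apply phi_sq_mul_rho; [lia | assumption]. }
      replace (omega d + 1) with (2 * a - 1 + 2 * INR 1) by (unfold a; simpl; field).
      apply Hmom.
    - now apply improper_int_0_inf_is_RInt_0_oo. }
  apply is_RInt_0_oo_improper_int_0_inf.
  apply (is_RInt_0_oo_ext
    (fun y => N ^ 2 * (laguerre n a (y ^ 2 / 4) ^ 2 * pow_gauss (omega d - 1) y))).
  { intros y Hy. symmetry. apply phi_div_sq_mul_rho; [lia | assumption]. }
  replace (/ (2 * omega d)) with (N ^ 2 * (I0 * 4 ^ 0 * laguerre_moment a n 0)).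
  - replace (omega d - 1) with (2 * a - 1 + 2 * INR 0) by (unfold a; simpl; field).
    apply Hmom.
  - rewrite laguerre_moment_succ in Hphi.
    apply (Rmult_eq_reg_l (2 * omega d)); [|lra].
    rewrite Rinv_r, <- Hphi by lra. unfold a. field.
Qed.

Theorem mainTheorem5 (d : nat) (Hd : (7 <= d)%nat) (n : nat) (N : R)
  (HN : 0 < N) (Hnorm : Hnorm_sq d (phi d n N) 1) :
  exists l, Hnorm_sq d (fun y => phi d n N y / y) l /\
            sqrt l <= 4 * INR n / omega d + 1.
Proof.
  exists (/ (2 * omega d)). split; [now apply Hnorm_sq_phi_div_y|].
  pose proof (omega_ge_1 d Hd) as Hw.
  assert (sqrt (/ (2 * omega d)) <= 1).
  { rewrite <- sqrt_1. apply sqrt_le_1_alt.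
    rewrite <- Rinv_1. apply Rinv_le_contravar; lra. }
  assert (0 <= 4 * INR n / omega d).
  { apply Rdiv_le_0_compat; [pose proof (pos_INR n) |]; lra. }
  lra.
Qed.
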